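(* Let $\mathcal P$ be a CPOS $2n$-gon which is equal-area, and write $P_{i+n+1}-P_{i+n}=-\alpha_i(P_{i+1}-P_i)$ with $\alpha_i>0$, $1\le i\le n$. Then either $\alpha_i=1$ for all $i$, in which case $\mathcal P$ is symmetric with respect to a point, or $n$ is odd and there is $\alpha>0$, $\alpha\ne1$, such that $\alpha_i=\alpha$ for all odd $i$ and $\alpha_i=\alpha^{-1}$ for all even $i$ ($1\le i\le n$).
   Context: A CPOS $2n$-gon ($n\ge2$) is a closed planar polygon $\mathcal P$ with vertices $P_1,\dots,P_{2n}$ (indices mod $2n$) bounding a convex region, with no two adjacent sides parallel, with $P_{i+n+1}-P_{i+n}$ parallel to $P_{i+1}-P_i$ for all $i$ (by convexity these are then antiparallel), and positively oriented: $[P_{i+1}-P_i,P_{j+1}-P_j]>0$ for $1\le i<j\le n$ ($[\cdot,\cdot]$ = determinant). $\mathcal P$ is equal-area if $[P_{i+1}-P_i,P_i-P_{i-1}]$ is the same for all $i$. $\mathcal P$ is symmetric with respect to $O$ if $P_{i+n}-O=O-P_i$ for all $i$. *)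

From HB Require Import structures.
From mathcomp Require Import all_boot all_order all_algebra.
Set Implicit Arguments. Unset Strict Implicit. Unset Printing Implicit Defensive.
Import Order.TTheory GRing.Theory Num.Theory.
Local Open Scope ring_scope.

Section Plane.
Variable R : realFieldType.

Definition pt := (R * R)%type.
Definition vsub (p q : pt) : pt := (p.1 - q.1, p.2 - q.2).
Definition vscale (a : R) (p : pt) : pt := (a * p.1, a * p.2).
Definition det2 (u v : pt) : R := u.1 * v.2 - u.2 * v.1.

(* A polygon with 2n vertices: P : nat -> pt, indices taken mod 2n. *)
Definition periodic (n : nat) (P : nat -> pt) := forall i, P (i + 2 * n)%N = P i.

Definition side (P : nat -> pt) (i : nat) : pt := vsub (P i.+1) (P i).

Definition convex_polygon (P : nat -> pt) :=
  forall i, (forall k, 0 <= det2 (side P i) (vsub (P k) (P i))) \/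
            (forall k, det2 (side P i) (vsub (P k) (P i)) <= 0).

Definition CPOS (n : nat) (P : nat -> pt) :=
  (2 <= n)%N /\ periodic n P /\ convex_polygon P /\
      (forall i, det2 (side P i.+1) (side P i) != 0) /\
      (forall i, det2 (side P (i + n)%N) (side P i) = 0) /\
      (* positive orientation *)
      (forall i j, (1 <= i)%N -> (i < j)%N -> (j <= n)%N ->
         0 < det2 (side P i) (side P j)).

Definition equal_area (P : nat -> pt) :=
  forall i j, det2 (side P i.+1) (side P i) = det2 (side P j.+1) (side P j).

Definition symmetric_wrt (n : nat) (P : nat -> pt) (O : pt) :=
  forall i, vsub (P (i + n)%N) O = vsub O (P i).

End Plane.

From HB Require Import structures.
From mathcomp Require Import all_boot all_order all_algebra.
From mathcomp Require Import ring lra.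
Set Implicit Arguments. Unset Strict Implicit. Unset Printing Implicit Defensive.
Import Order.TTheory GRing.Theory Num.Theory.
Local Open Scope ring_scope.

(* Write s_i = P_{i+1} - P_i and s_{i+n} = -a_i s_i.  The equal-area          *)
(* condition compares [s_{i+1+n}, s_{i+n}] = a_{i+1} a_i [s_{i+1}, s_i] with  *)
(* [s_{i+1}, s_i] (nonzero, adjacent sides are not parallel), which forces    *)
(* a_{i+1} a_i = 1; hence the ratios alternate a_1, 1/a_1, a_1, ...           *)
(* Comparing the wrap-around areas at indices n and 0 gives a_1 = a_n, using  *)
(* [s_1, s_n] > 0.  If a_1 = 1 all ratios are 1, so s_{i+n} = -s_i for every *)
(* i; then P_{i+n} + P_i is constant and the polygon is symmetric about half  *)
(* of it.  Otherwise n must be odd, since for even n we  *)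
(* would get a_1 = a_n = 1/a_1, i.e. a_1 = 1.                                 *)

Section Preliminaries.
Variable R : realFieldType.

Lemma det2_scale2 (a b : R) (u v : pt R) :
  det2 (vscale a u) (vscale b v) = a * b * det2 u v.
Proof. rewrite /det2 /vscale /=; ring. Qed.

Lemma det2_scalel (a : R) (u v : pt R) : det2 (vscale a u) v = a * det2 u v.
Proof. rewrite /det2 /vscale /=; ring. Qed.

Lemma det2_scaler (a : R) (u v : pt R) : det2 u (vscale a v) = a * det2 u v.
Proof. rewrite /det2 /vscale /=; ring. Qed.

Lemma vscaleNN (u : pt R) : vscale (-1) (vscale (-1) u) = u.
Proof. by case: u => x y; rewrite /vscale /=; congr pair; ring. Qed.

Lemma pos_self_inv_eq1 (a : R) : 0 < a -> a^-1 = a -> a = 1.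
Proof.
move=> a_gt0 a_inv.
have : a ^+ 2 == 1 by rewrite expr2 -{1}a_inv mulVf // lt0r_neq0.
by rewrite sqrf_eq1 => /orP[/eqP //|/eqP a_m1]; move: a_gt0; rewrite a_m1; lra.
Qed.

End Preliminaries.

Lemma alternating_of_reciprocal (F : fieldType) (n : nat) (b : nat -> F) :
  (forall i, (1 <= i < n)%N -> b i.+1 * b i = 1) ->
  forall i, (1 <= i <= n)%N -> b i = if odd i then b 1%N else (b 1%N)^-1.
Proof.
move=> recip; elim=> [//|i IH] /andP[_ i_lt_n].
case: (posnP i) => [-> //|i_gt0].
have rec_i : b i.+1 * b i = 1 by apply: recip; rewrite i_gt0.
have bi_neq0 : b i != 0.
  by apply/eqP=> bi0; move: rec_i; rewrite bi0 mulr0 => /esym/eqP; rewrite oner_eq0.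
rewrite -[b i.+1](mulfK bi_neq0) rec_i mul1r IH; last by rewrite i_gt0 ltnW.
by rewrite /=; case: (odd i); rewrite /= ?invrK.
Qed.

Section CentralSymmetry.
Variables (R : realFieldType) (n : nat) (P : nat -> pt R).

Definition antipodal_side (i : nat) := side P (i + n)%N = vscale (-1) (side P i).

(* If all pairs of opposite sides are antipodal, P_{i+n} + P_i does not       *)
(* depend on i, and the polygon is symmetric about half of that sum.         *)
Lemma symmetric_of_antipodal_sides :
  (forall i, antipodal_side i) -> exists O, symmetric_wrt n P O.
Proof.
move=> anti.
have sum_const : forall r,
    (P (r + n)%N).1 + (P r).1 = (P n).1 + (P 0%N).1 /\
    (P (r + n)%N).2 + (P r).2 = (P n).2 + (P 0%N).2.
  elim=> [|r [IH1 IH2]]; first by rewrite add0n.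
  move: (anti r); rewrite /antipodal_side /side /vsub /vscale addSn.
  by case=> E1 E2; split; lra.
exists (((P n).1 + (P 0%N).1) / 2, ((P n).2 + (P 0%N).2) / 2) => i.
have [S1 S2] := sum_const i; rewrite /vsub /=; congr pair; lra.
Qed.

Hypothesis P_periodic : periodic n P.

Lemma side_periodic i : side P (i + 2 * n)%N = side P i.
Proof. by rewrite /side -addSn !P_periodic. Qed.

(* Antipodality propagates by n steps, since two such steps return to the     *)
(* same side. *)
Lemma antipodal_side_shift i : antipodal_side i -> antipodal_side (i + n).
Proof.
rewrite /antipodal_side => anti_i.
by rewrite -addnA addnn -mul2n side_periodic anti_i vscaleNN.
Qed.

Lemma antipodal_sides_everywhere :
  (0 < n)%N -> (forall i, (1 <= i <= n)%N -> antipodal_side i) ->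
  forall i, antipodal_side i.
Proof.
move=> n_gt0 anti; elim/ltn_ind=> i IH.
case: (posnP i) => [->|i_gt0].
  have := antipodal_side_shift (anti n _); rewrite n_gt0 leqnn => /(_ isT).
  rewrite /antipodal_side add0n addnn -mul2n addnC side_periodic.
  by rewrite -{1}[(2 * n)%N]add0n side_periodic.
case: (leqP i n) => [i_le_n|n_lt_i]; first by apply: anti; rewrite i_gt0.
rewrite -(subnK (ltnW n_lt_i)); apply: antipodal_side_shift; apply: IH.
by rewrite ltn_subrL n_gt0 i_gt0.
Qed.

End CentralSymmetry.

Section Ratios.
Variables (R : realFieldType) (n : nat) (P : nat -> pt R) (alpha : nat -> R).
Hypothesis n_gt0 : (0 < n)%N.
Hypothesis P_periodic : periodic n P.
Hypothesis nonparallel : forall i, det2 (side P i.+1) (side P i) != 0.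
Hypothesis area_eq : equal_area P.
Hypothesis opposite : forall i, (1 <= i <= n)%N ->
  side P (i + n)%N = vscale (- alpha i) (side P i).

(* Equal area at the positions i and i+n: consecutive ratios are reciprocal. *)
Lemma alpha_reciprocal i : (1 <= i < n)%N -> alpha i.+1 * alpha i = 1.
Proof.
case/andP=> i_ge1 i_lt_n.
have := area_eq (i + n)%N i.
rewrite -addSn !opposite ?i_ge1 ?(ltnW i_lt_n) ?i_lt_n // det2_scale2.
by rewrite mulrNN => E; apply: (mulIf (nonparallel i)); rewrite mul1r.
Qed.

(* Equal area at the positions n and 0, which wrap around: alpha_1 = alpha_n *)
Lemma alpha_first_last :
  0 < det2 (side P 1) (side P n) -> alpha 1%N = alpha n.
Proof.
move=> orient_1n.
have s0 : side P 0 = vscale (- alpha n) (side P n).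
  by rewrite -(side_periodic P_periodic 0) add0n mul2n -addnn opposite ?n_gt0 ?leqnn.
have := area_eq n 0%N.
rewrite -add1n opposite ?n_gt0 // s0 det2_scalel det2_scaler => E.
by apply: (mulIf (lt0r_neq0 orient_1n)); lra.
Qed.

End Ratios.

Theorem mainTheorem4 (R : realFieldType) (n : nat) (P : nat -> pt R)
  (alpha : nat -> R) :
  CPOS n P -> equal_area P ->
  (forall i, (1 <= i <= n)%N -> 0 < alpha i) ->
  (forall i, (1 <= i <= n)%N ->
     side P (i + n)%N = vscale (- alpha i) (side P i)) ->
  ((forall i, (1 <= i <= n)%N -> alpha i = 1) /\ exists O, symmetric_wrt n P O)
  \/
  (odd n /\ exists a : R, [/\ 0 < a, a != 1 &
     forall i, (1 <= i <= n)%N -> alpha i = (if odd i then a else a^-1)]).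
Proof.
move=> [n_ge2 [per [_ [nonpar [_ orient]]]]] ea alpha_gt0 opp.
have n_gt0 : (0 < n)%N by apply: leq_trans n_ge2.
have alt := alternating_of_reciprocal (alpha_reciprocal nonpar ea opp).
have first_last := alpha_first_last n_gt0 per ea opp (orient 1%N n isT n_ge2 (leqnn n)).
have a_gt0 : 0 < alpha 1%N by apply: alpha_gt0; rewrite leqnn n_gt0.
case: (eqVneq (alpha 1%N) 1) => [a_eq1|a_neq1].
  have all1 i : (1 <= i <= n)%N -> alpha i = 1.
    by move=> i_range; rewrite alt // a_eq1 invr1; case: odd.
  left; split => //; apply: symmetric_of_antipodal_sides.
  by apply: antipodal_sides_everywhere => // i i_range; rewrite /antipodal_side opp ?all1.
right; split; last by exists (alpha 1%N); split.
apply: contraNT a_neq1 => n_even; apply/eqP/pos_self_inv_eq1 => //.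
have := alt n; rewrite n_gt0 leqnn (negbTE n_even) -first_last.
by move=> /(_ isT)/esym.
Qed.
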